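(* For all $x>0$ and $p\le 1$, $$H(x,x^p)^3\le x^{p+1}A(x,x^p)\le L(x,x^p)^3.$$
   Context: For $a,b>0$: $H(a,b)=\frac{2ab}{a+b}$, $A(a,b)=\frac{a+b}{2}$, and $L(a,b)=\frac{a-b}{\log a-\log b}$ for $a\ne b$, $L(a,a)=a$. *)

From Stdlib Require Import Reals.
Open Scope R_scope.

Definition Hmean (a b : R) : R := 2 * a * b / (a + b).
Definition Amean (a b : R) : R := (a + b) / 2.
Definition Lmean (a b : R) : R :=
  if Req_EM_T a b then a else (a - b) / (ln a - ln b).

(* Both inequalities hold for every pair a, b > 0 and are applied to a = x, b = x^p, using
   x^(p+1) = a b.  The first follows from a b = H A and H <= A.  For the second write
   a = c e^u, b = c e^-u; then A = c cosh u and L = c sinh u / u, so it reduces to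
   cosh u <= (sinh u / u)^3.  That inequality says the function sinh u / cosh(u)^(1/3) - u
   is nondecreasing, and its derivative is nonnegative by AM-GM. *)

From Stdlib Require Import Reals Lra Psatz.
From Coquelicot Require Import Coquelicot.
Open Scope R_scope.

Lemma Hmean_le_Amean a b : 0 < a -> 0 < b -> Hmean a b <= Amean a b.
Proof.
  intros Ha Hb.
  assert (E : Amean a b - Hmean a b = (a - b) ^ 2 / (2 * (a + b)))
    by (unfold Hmean, Amean; field; lra).
  assert (0 <= (a - b) ^ 2 / (2 * (a + b))).
  { unfold Rdiv; apply Rmult_le_pos; [apply pow2_ge_0 | apply Rlt_le, Rinv_0_lt_compat; lra]. }
  lra.
Qed.

Lemma Hmean_mul_Amean a b : 0 < a -> 0 < b -> Hmean a b * Amean a b = a * b.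
Proof. intros Ha Hb; unfold Hmean, Amean; field; lra. Qed.

Lemma Hmean_cube_le a b : 0 < a -> 0 < b -> Hmean a b ^ 3 <= a * b * Amean a b.
Proof.
  intros Ha Hb.
  pose proof (Hmean_le_Amean a b Ha Hb) as HA.
  assert (H0 : 0 <= Hmean a b) by (unfold Hmean; apply Rlt_le, Rdiv_lt_0_compat; nra).
  rewrite <- (Hmean_mul_Amean a b Ha Hb).
  replace (Hmean a b ^ 3) with (Hmean a b * (Hmean a b * Hmean a b)) by ring.
  replace (Hmean a b * Amean a b * Amean a b) with (Hmean a b * (Amean a b * Amean a b)) by ring.
  apply Rmult_le_compat_l; [lra | apply Rmult_le_compat; lra].
Qed.

Lemma cosh_pos u : 0 < cosh u.
Proof. unfold cosh; pose proof (exp_pos u); pose proof (exp_pos (- u)); lra. Qed.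

Lemma exp_mul_exp_opp u : exp u * exp (- u) = 1.
Proof. rewrite <- exp_plus, Rplus_opp_r; apply exp_0. Qed.

Lemma sinh_sqr u : sinh u ^ 2 = cosh u ^ 2 - 1.
Proof. unfold sinh, cosh; pose proof (exp_mul_exp_opp u); nra. Qed.

Lemma sinh_opp u : sinh (- u) = - sinh u.
Proof. unfold sinh; rewrite Ropp_involutive; field. Qed.

Lemma cosh_opp u : cosh (- u) = cosh u.
Proof. unfold cosh; rewrite Ropp_involutive; field. Qed.

Definition cbrt_cosh (u : R) : R := Rpower (cosh u) (/ 3).

Lemma cbrt_cosh_pos u : 0 < cbrt_cosh u.
Proof. apply exp_pos. Qed.

Lemma cbrt_cosh_cube u : cbrt_cosh u ^ 3 = cosh u.
Proof.
  unfold cbrt_cosh.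
  rewrite <- Rpower_pow by apply exp_pos.
  rewrite Rpower_mult; replace (/ 3 * INR 3) with 1 by (simpl; field).
  apply Rpower_1, cosh_pos.
Qed.

Lemma is_derive_sinh_div_cbrt_cosh u :
  is_derive (fun v => sinh v / cbrt_cosh v) u
    ((2 * cosh u ^ 2 + 1) / (3 * cbrt_cosh u ^ 4)).
Proof.
  pose proof (cosh_pos u) as Hc; pose proof (cbrt_cosh_pos u) as Hm.
  pose proof (cbrt_cosh_cube u) as Hm3; pose proof (sinh_sqr u) as Hs.
  unfold cbrt_cosh, Rpower in *; unfold sinh, cosh in *.
  auto_derive.
  - repeat split; try lra; apply Rgt_not_eq, exp_pos.
  - unfold Rdiv in *.
    set (m := exp (/ 3 * ln ((exp u + exp (- u)) * / 2))) in *.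
    set (s := (exp u - exp (- u)) * / 2) in *.
    rewrite <- Hm3 in Hs |- *.
    replace ((1 * exp u + - (- (1) * exp (- u))) * / 2) with (m ^ 3) by (rewrite Hm3; ring).
    replace ((exp u + - exp (- u)) * / 2) with s by (unfold s; ring).
    replace ((1 * exp u + - (1) * exp (- u)) * / 2) with s by (unfold s; ring).
    field_simplify; [|lra|lra].
    rewrite Hs; field; lra.
Qed.

(* AM-GM for m^6, m^6 and 1. *)
Lemma one_le_sinh_div_cbrt_cosh_derivative u :
  1 <= (2 * cosh u ^ 2 + 1) / (3 * cbrt_cosh u ^ 4).
Proof.
  pose proof (cbrt_cosh_pos u) as Hm.
  rewrite <- cbrt_cosh_cube; set (m := cbrt_cosh u) in *.
  assert (Hm4 : 0 < 3 * m ^ 4) by (pose proof (pow_lt m 4 Hm); lra).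
  apply Rmult_le_reg_r with (3 * m ^ 4); [exact Hm4|].
  unfold Rdiv; rewrite Rmult_assoc, Rinv_l, Rmult_1_r by lra.
  assert (Hsq : 0 <= (m * m - 1) ^ 2 * (2 * m * m + 1))
    by (apply Rmult_le_pos; [apply pow2_ge_0 | nra]).
  nra.
Qed.

Lemma mul_cbrt_cosh_le_sinh u : 0 <= u -> u * cbrt_cosh u <= sinh u.
Proof.
  intros Hu.
  set (g v := sinh v / cbrt_cosh v - v).
  assert (Hg : forall v, is_derive g v ((2 * cosh v ^ 2 + 1) / (3 * cbrt_cosh v ^ 4) - 1)).
  { intros v; apply (is_derive_minus (fun v => sinh v / cbrt_cosh v) (fun v => v)).
    - apply is_derive_sinh_div_cbrt_cosh.
    - apply (is_derive_id (K := R_AbsRing)). }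
  destruct (MVT_gen g 0 u _ (fun v _ => Hg v)) as [c [_ Hc]].
  { intros v _; apply continuity_pt_filterlim, (ex_derive_continuous (V := R_NormedModule)).
    eexists; apply Hg. }
  assert (Hg0 : g 0 = 0) by (unfold g, sinh; rewrite Ropp_0; field; apply Rgt_not_eq, cbrt_cosh_pos).
  pose proof (one_le_sinh_div_cbrt_cosh_derivative c) as Hd.
  assert (Hgu : 0 <= g u) by nra.
  pose proof (cbrt_cosh_pos u) as Hm.
  unfold g in Hgu.
  apply Rmult_le_reg_r with (/ cbrt_cosh u); [apply Rinv_0_lt_compat; lra|].
  rewrite Rmult_assoc, Rinv_r by lra; lra.
Qed.

Lemma cosh_le_sinhc_cube u : u <> 0 -> cosh u <= (sinh u / u) ^ 3.
Proof.
  intros Hu.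
  assert (Hpos : forall v, 0 < v -> cosh v <= (sinh v / v) ^ 3).
  { intros v Hv.
    rewrite <- cbrt_cosh_cube.
    apply pow_incr; split; [apply Rlt_le, cbrt_cosh_pos|].
    apply Rmult_le_reg_l with v; [lra|].
    replace (v * (sinh v / v)) with (sinh v) by (field; lra).
    apply mul_cbrt_cosh_le_sinh; lra. }
  destruct (Rlt_or_le 0 u) as [H|H]; [now apply Hpos|].
  rewrite <- cosh_opp.
  replace (sinh u / u) with (sinh (- u) / - u) by (rewrite sinh_opp; field; lra).
  apply Hpos; lra.
Qed.

Lemma Amean_exp_opp c u : Amean (c * exp u) (c * exp (- u)) = c * cosh u.
Proof. unfold Amean, cosh; field. Qed.

Lemma Lmean_exp_opp c u :
  0 < c -> u <> 0 -> Lmean (c * exp u) (c * exp (- u)) = c * (sinh u / u).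
Proof.
  intros Hc Hu; unfold Lmean, sinh.
  destruct Req_EM_T as [E|_].
  - exfalso; apply Hu.
    apply Rmult_eq_reg_l, exp_inv in E; lra.
  - rewrite !ln_mult, !ln_exp by (try apply exp_pos; lra).
    field; lra.
Qed.

Lemma mul_Amean_le_Lmean_cube a b : 0 < a -> 0 < b -> a * b * Amean a b <= Lmean a b ^ 3.
Proof.
  intros Ha Hb.
  destruct (Req_dec a b) as [<-|Hab].
  { unfold Lmean, Amean; destruct Req_EM_T; [|congruence]; lra. }
  set (c := exp ((ln a + ln b) / 2)); set (u := (ln a - ln b) / 2).
  assert (Hc : 0 < c) by apply exp_pos.
  assert (Hu : u <> 0) by (intros E; apply Hab, ln_inv; unfold u in E; lra).
  assert (Ea : a = c * exp u).
  { unfold c, u; rewrite <- exp_plus.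
    replace ((ln a + ln b) / 2 + (ln a - ln b) / 2) with (ln a) by field.
    rewrite exp_ln; lra. }
  assert (Eb : b = c * exp (- u)).
  { unfold c, u; rewrite <- exp_plus.
    replace ((ln a + ln b) / 2 + - ((ln a - ln b) / 2)) with (ln b) by field.
    rewrite exp_ln; lra. }
  rewrite Ea, Eb, Amean_exp_opp, Lmean_exp_opp by assumption.
  replace (c * exp u * (c * exp (- u)) * (c * cosh u))
    with (c ^ 3 * cosh u * (exp u * exp (- u))) by ring.
  rewrite exp_mul_exp_opp, Rmult_1_r, Rpow_mult_distr.
  apply Rmult_le_compat_l; [apply pow_le; lra | now apply cosh_le_sinhc_cube].
Qed.

Theorem mainTheorem8 (x p : R) (hx : 0 < x) (hp : p <= 1) :
  Hmean x (Rpower x p) ^ 3 <= Rpower x (p + 1) * Amean x (Rpower x p) /\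
  Rpower x (p + 1) * Amean x (Rpower x p) <= Lmean x (Rpower x p) ^ 3.
Proof.
  assert (Hxp : 0 < Rpower x p) by apply exp_pos.
  rewrite Rpower_plus, Rpower_1, (Rmult_comm (Rpower x p)) by exact hx.
  split; [apply Hmean_cube_le | apply mul_Amean_le_Lmean_cube]; assumption.
Qed.
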